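(* Let $L>0$ and let $\rho:[0,L]\to\mathbb{R}_{>0}$ be a fixed (time-independent) normalized density, $\int_0^L\rho=1$, for which there are constants $0<d_l\le d_u<\infty$ with $d_l\le \rho(x)\le d_u$ on $[0,L]$ (and such that $\partial_x\rho$ is bounded, with $0<D_l\le\partial_x\rho\le D_u<\infty$ on $(0,L)$). Let $\Theta(x)=\int_0^x\rho(\bar x)\,d\bar x$. Consider the system $$\partial_t X=\frac{1}{\rho}\,\partial_x\!\left(\frac{\partial_x X}{\rho}\right)\ \text{on } (0,L),\qquad X(t,0)=\alpha(t),\quad X(t,L)=\beta(t),\quad X(0,x)=X_0(x),$$ $$\dot\alpha(t)=-\alpha(t),\qquad \dot\beta(t)=1-\beta(t).$$ Assume that this system is well posed, that its solution is sufficiently smooth (at least $C^2$ in the spatial variable, also as $t\to\infty$), and that $X(t,\cdot)$ belongs to the Sobolev space $H^1((0,L))$. Then for every $C^2$ initial condition $X_0$, the solution $X(t,x)$ converges pointwise to $\Theta(x)$ as $t\to\infty$, for all $x\in(0,L)$.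
   Context: $H^1((0,L))=W^{1,2}((0,L))$ denotes the Sobolev space of square-integrable functions with square-integrable weak derivative. The variable $X$ is a ''pseudo-coordinate'' of the agents of a stationary one-dimensional swarm with density $\rho$, and $\alpha,\beta$ are boundary inputs whose initial values are the boundary values of $X_0$. *)

From Stdlib Require Import Reals.
From Coquelicot Require Import Coquelicot.
Open Scope R_scope.

Definition cont_on_closed (a b : R) (f : R -> R) : Prop :=
  forall x, a <= x <= b ->
  forall eps : R, 0 < eps -> exists delta : R, 0 < delta /\
    forall y, a <= y <= b -> Rabs (y - x) < delta -> Rabs (f y - f x) < eps.

Definition C2_on (a b : R) (f : R -> R) : Prop :=
  exists f1 f2 : R -> R,
    (forall x, a < x < b -> is_derive f x (f1 x) /\ is_derive f1 x (f2 x)) /\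
    cont_on_closed a b f /\ cont_on_closed a b f1 /\ cont_on_closed a b f2.

Definition cont_on_strip (L : R) (g : R -> R -> R) : Prop :=
  forall t x, 0 <= t -> 0 <= x <= L ->
  forall eps : R, 0 < eps -> exists delta : R, 0 < delta /\
    forall s y, 0 <= s -> 0 <= y <= L ->
      Rabs (s - t) < delta -> Rabs (y - x) < delta ->
      Rabs (g s y - g t x) < eps.

Definition test_fun (L : R) (phi : R -> R) : Prop :=
  (forall n x, ex_derive_n phi n x) /\
  exists a b, 0 < a /\ a < b /\ b < L /\
    forall y, (y < a \/ b < y) -> phi y = 0.

(* Membership in H^1((0,L)) = W^{1,2}((0,L)) (Riemann-integral version):
   u is square integrable and has a square integrable weak derivative g. *)
Definition in_H1 (L : R) (u : R -> R) : Prop :=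
  ex_RInt (fun x => u x ^ 2) 0 L /\
  exists g : R -> R,
    ex_RInt (fun x => g x ^ 2) 0 L /\
    forall phi, test_fun L phi ->
      RInt (fun x => u x * Derive phi x) 0 L = - RInt (fun x => g x * phi x) 0 L.

Definition Theta (rho : R -> R) (x : R) : R := RInt rho 0 x.

From Stdlib Require Import Reals Lra Psatz ClassicalEpsilon.
From Coquelicot Require Import Coquelicot.
Open Scope R_scope.

(* With Theta' = rho, the operator L u = (1/rho) (u'/rho)' satisfies L Theta = 0 and
   L (Theta^2) = 2, while the boundary values relax to Theta 0 = 0 and Theta L = 1 like
   e^{-t}.  Hence, for eps > 0 and C dominating the data, the functions
   +-Theta + C e^{-t} (2 - Theta^2) + eps (1 + t) are strict supersolutions lying above
   +-X initially and on the boundary, and the parabolic maximum principle keeps them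
   above +-X.  Letting eps -> 0 gives |X t x - Theta x| <= 2 C e^{-t}.  The maximum
   principle follows the spatial maximum in time; it moves Lipschitz-continuously
   because the bounds on X1, X2 and rho' bound the time derivative L X. *)

(* [clamp a b] extends functions on [a, b] continuously to R, so that the Stdlib
   results on [continuity_pt] apply to [cont_on_closed]. *)
Definition clamp (a b y : R) : R := Rmax a (Rmin b y).

Lemma clamp_in a b y : a <= b -> a <= clamp a b y <= b.
Proof. intros; unfold clamp, Rmax, Rmin; repeat destruct Rle_dec; lra. Qed.

Lemma clamp_id a b y : a <= y <= b -> clamp a b y = y.
Proof. intros; unfold clamp, Rmax, Rmin; repeat destruct Rle_dec; lra. Qed.

Lemma clamp_lipschitz a b y z : Rabs (clamp a b y - clamp a b z) <= Rabs (y - z).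
Proof.
  unfold clamp, Rmax, Rmin; repeat destruct Rle_dec; unfold Rabs;
  repeat destruct Rcase_abs; lra.
Qed.

Lemma continuity_pt_clamp a b f x : a <= b -> cont_on_closed a b f ->
  continuity_pt (fun y => f (clamp a b y)) x.
Proof.
  intros Hab Hf eps Heps.
  destruct (Hf (clamp a b x) (clamp_in a b x Hab) eps Heps) as [d [Hd H]].
  exists d; split; [lra|]. intros y [_ Hy]. simpl in *. unfold R_dist in *.
  apply H; [apply clamp_in; lra|].
  eapply Rle_lt_trans; [apply clamp_lipschitz|exact Hy].
Qed.

Lemma cont_on_closed_of_continuity_pt a b f :
  (forall x, a <= x <= b -> continuity_pt f x) -> cont_on_closed a b f.
Proof.
  intros Hf x Hx eps Heps. destruct (Hf x Hx eps Heps) as [d [Hd H]].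
  exists d; split; [lra|]. intros y _ Hy.
  destruct (Req_dec y x) as [->|Hne]; [rewrite Rminus_eq_0, Rabs_R0; lra|].
  apply (H y). split; [split; [exact I|auto]|exact Hy].
Qed.

Lemma cont_on_closed_ext a b f g : (forall x, a <= x <= b -> f x = g x) ->
  cont_on_closed a b f -> cont_on_closed a b g.
Proof.
  intros Hfg Hf x Hx eps Heps. destruct (Hf x Hx eps Heps) as [d [Hd H]].
  exists d; split; [exact Hd|]. intros y Hy Hyx.
  rewrite <- (Hfg x Hx), <- (Hfg y Hy). exact (H y Hy Hyx).
Qed.

Lemma cont_on_closed_op2 (op : R -> R -> R) a b f g :
  (forall u v x, continuity_pt u x -> continuity_pt v x ->
     continuity_pt (fun y => op (u y) (v y)) x) ->
  a <= b -> cont_on_closed a b f -> cont_on_closed a b g ->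
  cont_on_closed a b (fun x => op (f x) (g x)).
Proof.
  intros Hop Hab Hf Hg.
  apply cont_on_closed_ext with (fun x => op (f (clamp a b x)) (g (clamp a b x))).
  { intros x Hx. rewrite clamp_id by exact Hx. reflexivity. }
  apply cont_on_closed_of_continuity_pt. intros x _.
  apply Hop; apply continuity_pt_clamp; assumption.
Qed.

Lemma cont_on_closed_plus a b f g : a <= b ->
  cont_on_closed a b f -> cont_on_closed a b g -> cont_on_closed a b (fun x => f x + g x).
Proof. apply cont_on_closed_op2. intros u v x. apply (continuity_pt_plus u v). Qed.

Lemma cont_on_closed_minus a b f g : a <= b ->
  cont_on_closed a b f -> cont_on_closed a b g -> cont_on_closed a b (fun x => f x - g x).
Proof. apply cont_on_closed_op2. intros u v x. apply (continuity_pt_minus u v). Qed.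

Lemma cont_on_closed_mult a b f g : a <= b ->
  cont_on_closed a b f -> cont_on_closed a b g -> cont_on_closed a b (fun x => f x * g x).
Proof. apply cont_on_closed_op2. intros u v x. apply (continuity_pt_mult u v). Qed.

Lemma cont_on_closed_const a b c : cont_on_closed a b (fun _ => c).
Proof.
  apply cont_on_closed_of_continuity_pt. intros x _. apply continuity_pt_const.
  intros u v; reflexivity.
Qed.

Lemma cont_on_closed_bounded a b f : a <= b -> cont_on_closed a b f ->
  exists M, forall x, a <= x <= b -> Rabs (f x) <= M.
Proof.
  intros Hab Hf.
  destruct (continuity_ab_maj (fun y => Rabs (f (clamp a b y))) a b Hab) as [xm [Hxm _]].
  { intros c _. apply (continuity_pt_comp (fun y => f (clamp a b y)) Rabs).
    - apply continuity_pt_clamp; assumption.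
    - apply Rcontinuity_abs. }
  exists (Rabs (f (clamp a b xm))). intros x Hx.
  specialize (Hxm x Hx). rewrite clamp_id in Hxm by exact Hx. exact Hxm.
Qed.

Lemma cont_on_closed_argmax a b f : a <= b -> cont_on_closed a b f ->
  exists xm, a <= xm <= b /\ forall x, a <= x <= b -> f x <= f xm.
Proof.
  intros Hab Hf.
  destruct (continuity_ab_maj (fun y => f (clamp a b y)) a b Hab) as [xm [Hxm Hin]].
  { intros c _. apply continuity_pt_clamp; assumption. }
  exists xm. split; [exact Hin|]. intros x Hx.
  specialize (Hxm x Hx). rewrite !clamp_id in Hxm by assumption. exact Hxm.
Qed.

Lemma cont_on_strip_space L g t : 0 <= t -> cont_on_strip L g -> cont_on_closed 0 L (g t).
Proof.
  intros Ht Hg x Hx eps Heps. destruct (Hg t x Ht Hx eps Heps) as [d [Hd H]].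
  exists d; split; [exact Hd|]. intros y Hy Hyx.
  apply H; [lra|exact Hy|rewrite Rminus_eq_0, Rabs_R0; exact Hd|exact Hyx].
Qed.

Lemma continuity_pt_strip_time L g y r : 0 <= y <= L -> cont_on_strip L g ->
  continuity_pt (fun s => g (Rmax 0 s) y) r.
Proof.
  intros Hy Hg eps Heps.
  destruct (Hg (Rmax 0 r) y (Rmax_l 0 r) Hy eps Heps) as [d [Hd H]].
  exists d; split; [lra|]. intros s [_ Hs]. simpl in *. unfold R_dist in *.
  apply H; [apply Rmax_l|exact Hy| |rewrite Rminus_eq_0, Rabs_R0; exact Hd].
  eapply Rle_lt_trans; [|exact Hs].
  unfold Rmax; repeat destruct Rle_dec; unfold Rabs; repeat destruct Rcase_abs; lra.
Qed.

Lemma continuity_pt_of_is_derive f x l : is_derive f x l -> continuity_pt f x.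
Proof.
  intros H. apply continuity_pt_filterlim, (ex_derive_continuous f x). exists l; exact H.
Qed.

Lemma continuity_pt_of_lipschitz (m : R -> R) K x :
  (forall t s, Rabs (m t - m s) <= K * Rabs (t - s)) -> continuity_pt m x.
Proof.
  intros Hm eps Heps.
  assert (HK : 0 < Rabs K + 1) by (pose proof (Rabs_pos K); lra).
  exists (eps / (Rabs K + 1)). split; [apply Rlt_gt, Rdiv_lt_0_compat; lra|].
  intros y [_ Hy]. simpl in *. unfold R_dist in *.
  apply Rle_lt_trans with ((Rabs K + 1) * Rabs (y - x)).
  - eapply Rle_trans; [apply Hm|]. apply Rmult_le_compat_r; [apply Rabs_pos|].
    pose proof (Rle_abs K); lra.
  - replace eps with ((Rabs K + 1) * (eps / (Rabs K + 1))) by (field; lra).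
    apply Rmult_lt_compat_l; lra.
Qed.

Lemma is_derive_scal_minus (f g : R -> R) k x df dg :
  is_derive f x df -> is_derive g x dg -> is_derive (fun z => k * f z - g z) x (k * df - dg).
Proof. intros Hf Hg. exact (is_derive_minus _ _ _ _ _ (is_derive_scal _ _ k _ Hf) Hg). Qed.

Lemma is_derive_nonpos_of_right_max g x l d : is_derive g x l -> 0 < d ->
  (forall y, x < y < x + d -> g y <= g x) -> l <= 0.
Proof.
  intros Hg Hd Hmax. apply is_derive_Reals in Hg.
  destruct (Rle_or_lt l 0) as [|Hl]; [assumption|exfalso].
  destruct (Hg l Hl) as [[e He] Hquot].
  set (h := Rmin (e / 2) (d / 2)).
  assert (Hh : 0 < h /\ h < e /\ h < d) by (unfold h, Rmin; destruct Rle_dec; lra).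
  specialize (Hquot h ltac:(lra) ltac:(rewrite Rabs_right; simpl; lra)).
  assert (Hdown : (g (x + h) - g x) / h <= 0).
  { unfold Rdiv. apply Rmult_le_0_r; [apply Rle_minus, Hmax; lra|].
    left; apply Rinv_0_lt_compat; lra. }
  revert Hquot. unfold Rabs; destruct Rcase_abs; lra.
Qed.

Lemma is_derive_nonneg_of_left_max g x l d : is_derive g x l -> 0 < d ->
  (forall y, x - d < y < x -> g y <= g x) -> 0 <= l.
Proof.
  intros Hg Hd Hmax.
  assert (Hrefl : is_derive (fun y => g (- y)) (- x) (- l)).
  { replace (- l) with (scal (-1) l) by (unfold scal; simpl; unfold mult; simpl; ring).
    apply (is_derive_comp g (fun y => - y)); [rewrite Ropp_involutive; exact Hg|].
    auto_derive; [exact I|ring]. }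
  cut (- l <= 0); [lra|].
  apply (is_derive_nonpos_of_right_max _ _ _ d Hrefl Hd).
  intros y Hy. rewrite Ropp_involutive. apply Hmax; lra.
Qed.

Lemma is_derive_pos_right_of_root g x l : is_derive g x l -> 0 < l -> g x = 0 ->
  exists d, 0 < d /\ forall y, x < y < x + d -> 0 < g y.
Proof.
  intros Hg Hl Hroot. apply is_derive_Reals in Hg.
  destruct (Hg l Hl) as [[e He] Hquot]. exists e; split; [exact He|].
  intros y Hy.
  specialize (Hquot (y - x) ltac:(lra) ltac:(rewrite Rabs_right; simpl; lra)).
  replace (x + (y - x)) with y in Hquot by ring. rewrite Hroot, Rminus_0_r in Hquot.
  assert (Hquot_pos : 0 < g y / (y - x)) by (revert Hquot; unfold Rabs; destruct Rcase_abs; lra).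
  replace (g y) with (g y / (y - x) * (y - x)) by (field; lra).
  apply Rmult_lt_0_compat; lra.
Qed.

Lemma MVT_open f df a b : a < b ->
  (forall c, a < c < b -> is_derive f c (df c)) ->
  (forall c, a <= c <= b -> continuity_pt f c) ->
  exists c, a < c < b /\ f b - f a = df c * (b - a).
Proof.
  intros Hab Hd Hc.
  assert (pr1 : forall c, a < c < b -> derivable_pt f c).
  { intros c Hc'. exists (df c). apply is_derive_Reals, Hd, Hc'. }
  assert (pr2 : forall c, a < c < b -> derivable_pt id c) by (intros; apply derivable_pt_id).
  destruct (MVT f id a b pr1 pr2 Hab Hc) as [c [P E]].
  { intros; apply derivable_continuous_pt, derivable_pt_id. }
  exists c; split; [exact P|].
  rewrite (derive_pt_eq_0 f c (df c) (pr1 c P)) in E by (apply is_derive_Reals, Hd, P).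
  rewrite (derive_pt_eq_0 id c 1 (pr2 c P)) in E by apply derivable_pt_lim_id.
  unfold id in E. lra.
Qed.

Lemma interior_max_derive f f1 a b x d : a < x < b ->
  (forall y, a < y < b -> is_derive f y (f1 y)) -> is_derive f1 x d ->
  (forall y, a < y < b -> f y <= f x) -> f1 x = 0 /\ d <= 0.
Proof.
  intros Hx Hder Hd Hmax.
  assert (Hcrit : f1 x = 0).
  { apply Rle_antisym.
    - apply (is_derive_nonpos_of_right_max f x (f1 x) (b - x)); [apply Hder; lra|lra|].
      intros; apply Hmax; lra.
    - apply (is_derive_nonneg_of_left_max f x (f1 x) (x - a)); [apply Hder; lra|lra|].
      intros; apply Hmax; lra. }
  split; [exact Hcrit|].
  destruct (Rle_or_lt d 0) as [|Hdpos]; [assumption|exfalso].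
  (* f1 > 0 just right of x, so f increases there *)
  destruct (is_derive_pos_right_of_root f1 x d Hd Hdpos Hcrit) as [e [He Hpos]].
  set (y := x + Rmin e (b - x) / 2).
  assert (Hy : x < y < x + e /\ y < b) by (unfold y, Rmin; destruct Rle_dec; lra).
  destruct (MVT_open f f1 x y ltac:(lra)) as [c [Hc E]].
  { intros c Hc. apply Hder; lra. }
  { intros c Hc. apply (continuity_pt_of_is_derive f c (f1 c)), Hder; lra. }
  assert (0 < f1 c * (y - x)) by (apply Rmult_lt_0_compat; [apply Hpos|]; lra).
  assert (f y <= f x) by (apply Hmax; lra).
  lra.
Qed.

Lemma lipschitz_of_derive_bound f df a b B : a <= b ->
  (forall c, a < c < b -> is_derive f c (df c)) ->
  (forall c, a <= c <= b -> continuity_pt f c) ->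
  (forall c, a < c < b -> Rabs (df c) <= B) ->
  Rabs (f b - f a) <= B * Rabs (b - a).
Proof.
  intros Hab Hd Hc HB. destruct (Req_dec a b) as [->|Hne].
  { rewrite !Rminus_eq_0, !Rabs_R0; lra. }
  destruct (MVT_open f df a b ltac:(lra) Hd Hc) as [c [Hc' E]].
  rewrite E, Rabs_mult. apply Rmult_le_compat_r; [apply Rabs_pos|exact (HB c Hc')].
Qed.

Lemma lipschitz_of_ordered (f : R -> R) K :
  (forall u v, 0 <= u <= v -> Rabs (f v - f u) <= K * Rabs (v - u)) ->
  forall t s, 0 <= t -> 0 <= s -> Rabs (f t - f s) <= K * Rabs (t - s).
Proof.
  intros Hf t s Ht Hs. destruct (Rle_lt_dec s t) as [Hst|Hts].
  - apply Hf; lra.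
  - rewrite Rabs_minus_sym, (Rabs_minus_sym t). apply Hf; lra.
Qed.

Lemma relaxation_ode_solution (a : R -> R) k :
  (forall t, 0 <= t -> is_derive a t (k - a t)) ->
  forall t, 0 <= t -> a t = k + (a 0 - k) * exp (- t).
Proof.
  intros Ha t Ht.
  set (h r := (a r - k) * exp r).
  assert (Hh : forall r, 0 <= r -> is_derive h r 0).
  { intros r Hr. unfold h. assert (Har := Ha r Hr).
    auto_derive; [exists (k - a r); exact Har|].
    replace (Derive (fun x => a x) r) with (k - a r)
      by (symmetry; apply is_derive_unique, Har).
    ring. }
  destruct (MVT_gen h 0 t (fun _ => 0)) as [c [_ Hconst]].
  { intros x Hx. apply Hh. unfold Rmin in Hx; destruct Rle_dec; lra. }
  { intros x Hx. apply (continuity_pt_of_is_derive h x 0), Hh.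
    unfold Rmin in Hx; destruct Rle_dec; lra. }
  unfold h in Hconst. rewrite exp_0 in Hconst.
  replace (a t) with (k + (a t - k) * exp t * exp (- t))
    by (rewrite Rmult_assoc, <- exp_plus, Rplus_opp_r, exp_0; ring).
  replace ((a t - k) * exp t) with (a 0 - k) by lra. reflexivity.
Qed.

Lemma exp_neg_lipschitz t s : 0 <= t -> 0 <= s ->
  Rabs (exp (- t) - exp (- s)) <= Rabs (t - s).
Proof.
  rewrite <- (Rmult_1_l (Rabs (t - s))). revert t s.
  apply (lipschitz_of_ordered (fun r => exp (- r))). intros u v Huv.
  assert (Hd : forall r, is_derive (fun r => exp (- r)) r (- exp (- r)))
    by (intros r; auto_derive; [exact I|ring]).
  apply (lipschitz_of_derive_bound (fun r => exp (- r)) (fun r => - exp (- r))); [lra|intros; apply Hd| |].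
  - intros c _. apply (continuity_pt_of_is_derive _ c _ (Hd c)).
  - intros c Hc. rewrite Rabs_Ropp, Rabs_right by (left; apply exp_pos).
    rewrite <- exp_0. left; apply exp_increasing; lra.
Qed.

Lemma is_lim_of_exp_decay (f : R -> R) l C :
  (forall t, 0 <= t -> Rabs (f t - l) <= C * exp (- t)) -> is_lim f p_infty l.
Proof.
  intros Hf. apply is_lim_spec. intros eps. simpl.
  assert (Heps := cond_pos eps).
  exists (Rmax 0 (C / eps)). intros t Ht.
  assert (Ht0 : 0 < t) by (pose proof (Rmax_l 0 (C / eps)); lra).
  assert (HCt : C < eps * t).
  { apply Rle_lt_trans with (eps * (C / eps)); [right; field; lra|].
    apply Rmult_lt_compat_l; [lra|]. pose proof (Rmax_r 0 (C / eps)); lra. }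
  assert (Hexp : t < exp t) by (pose proof (exp_ineq1 t ltac:(lra)); lra).
  eapply Rle_lt_trans; [apply Hf; lra|].
  rewrite exp_Ropp. apply Rmult_lt_reg_r with (exp t); [apply exp_pos|].
  rewrite Rmult_assoc, Rinv_l by (pose proof (exp_pos t); lra).
  assert (eps * t < eps * exp t) by (apply Rmult_lt_compat_l; lra). lra.
Qed.

Lemma Theta_0 rho : Theta rho 0 = 0.
Proof. apply (@RInt_point R_CompleteNormedModule). Qed.

Section Antiderivative.
Variables (L : R) (rho : R -> R).
Hypothesis HL : 0 <= L.
Hypothesis Hrho : cont_on_closed 0 L rho.

Let rhoc y := rho (clamp 0 L y).

Let ex_RInt_rhoc a b : ex_RInt rhoc a b.
Proof.
  apply (@ex_RInt_continuous R_CompleteNormedModule). intros z _.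
  apply continuity_pt_filterlim, continuity_pt_clamp; assumption.
Qed.

Let Theta_clamp y : 0 <= y <= L -> Theta rho y = Theta rhoc y.
Proof.
  intros Hy. apply RInt_ext. intros x Hx. unfold rhoc. rewrite clamp_id; [reflexivity|].
  revert Hx. unfold Rmin, Rmax; destruct Rle_dec; lra.
Qed.

Let is_derive_Theta_clamp y : is_derive (Theta rhoc) y (rhoc y).
Proof.
  apply (is_derive_RInt rhoc (Theta rhoc) 0).
  - apply filter_forall. intros z. apply (@RInt_correct R_CompleteNormedModule), ex_RInt_rhoc.
  - apply continuity_pt_filterlim, continuity_pt_clamp; assumption.
Qed.

Lemma is_derive_Theta y : 0 < y < L -> is_derive (Theta rho) y (rho y).
Proof.
  intros Hy. replace (rho y) with (rhoc y) by (unfold rhoc; rewrite clamp_id; lra).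
  apply (is_derive_ext_loc (Theta rhoc)); [|apply is_derive_Theta_clamp].
  apply (locally_interval _ y 0 L); [exact (proj1 Hy)|exact (proj2 Hy)|].
  intros z Hz0 HzL. symmetry. apply Theta_clamp. simpl in *. lra.
Qed.

Lemma Theta_cont : cont_on_closed 0 L (Theta rho).
Proof.
  apply cont_on_closed_ext with (Theta rhoc); [intros; symmetry; apply Theta_clamp; assumption|].
  apply cont_on_closed_of_continuity_pt. intros x _.
  exact (continuity_pt_of_is_derive _ x _ (is_derive_Theta_clamp x)).
Qed.

Lemma Theta_range : (forall y, 0 <= y <= L -> 0 <= rho y) ->
  forall y, 0 <= y <= L -> 0 <= Theta rho y <= Theta rho L.
Proof.
  intros Hpos y Hy. rewrite !Theta_clamp by lra.
  assert (Hnonneg : forall a b, 0 <= a <= b -> b <= L -> 0 <= RInt rhoc a b).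
  { intros a b Hab HbL. apply RInt_ge_0; [lra|apply ex_RInt_rhoc|].
    intros x Hx. unfold rhoc. rewrite clamp_id by lra. apply Hpos; lra. }
  unfold Theta.
  rewrite <- (@RInt_Chasles R_CompleteNormedModule rhoc 0 y L) by apply ex_RInt_rhoc.
  assert (H1 := Hnonneg 0 y ltac:(lra) ltac:(lra)).
  assert (H2 := Hnonneg y L ltac:(lra) ltac:(lra)).
  change plus with Rplus. lra.
Qed.

End Antiderivative.

Section MaximumPrinciple.
Variables (L K : R) (W : R -> R -> R).
Hypothesis HL : 0 < L.
Hypothesis HW_cont : forall t, 0 <= t -> cont_on_closed 0 L (W t).
Hypothesis HW_lip : forall t s y, 0 <= t -> 0 <= s -> 0 <= y <= L ->
  Rabs (W t y - W s y) <= K * Rabs (t - s).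

Lemma spatial_argmax_lipschitz : exists am : R -> R,
  (forall t, 0 <= t -> 0 <= am t <= L /\ forall y, 0 <= y <= L -> W t y <= W t (am t)) /\
  (forall t s, 0 <= t -> 0 <= s -> Rabs (W t (am t) - W s (am s)) <= K * Rabs (t - s)).
Proof.
  set (P t y := 0 <= t -> 0 <= y <= L /\ forall z, 0 <= z <= L -> W t z <= W t y).
  exists (fun t => epsilon (inhabits 0) (P t)).
  assert (Ham : forall t, 0 <= t -> P t (epsilon (inhabits 0) (P t))).
  { intros t Ht. apply epsilon_spec.
    destruct (cont_on_closed_argmax 0 L (W t) ltac:(lra) (HW_cont t Ht)) as [y Hy].
    exists y; intros _; exact Hy. }
  split; [intros t Ht; exact (Ham t Ht Ht)|].
  intros t s Ht Hs.
  destruct (Ham t Ht Ht) as [Hat Hmax_t]. destruct (Ham s Hs Hs) as [Has Hmax_s].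
  set (at_ := epsilon (inhabits 0) (P t)) in *. set (as_ := epsilon (inhabits 0) (P s)) in *.
  (* W t (am t) >= W t (am s) and W s (am s) >= W s (am t) squeeze the difference *)
  assert (H1 := Hmax_t as_ Has). assert (H2 := Hmax_s at_ Hat).
  assert (B1 := HW_lip t s at_ Ht Hs Hat). assert (B2 := HW_lip t s as_ Ht Hs Has).
  revert B1 B2. generalize (K * Rabs (t - s)). intros k.
  unfold Rabs; repeat destruct Rcase_abs; lra.
Qed.

Lemma parabolic_maximum_principle :
  (forall y, 0 <= y <= L -> W 0 y <= 0) ->
  (forall t, 0 <= t -> W t 0 <= 0 /\ W t L <= 0) ->
  (forall t y, 0 < t -> 0 < y < L ->
     (forall z, 0 <= z <= L -> W t z <= W t y) ->
     (forall s, 0 <= s <= t -> W s y <= W t y) -> False) ->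
  forall t y, 0 <= t -> 0 <= y <= L -> W t y <= 0.
Proof.
  intros Hinit Hbdry Hno_max t0 y0 Ht0 Hy0.
  destruct (Rle_or_lt (W t0 y0) 0) as [|Hpos]; [assumption|exfalso].
  destruct spatial_argmax_lipschitz as [am [Ham Hlip]].
  assert (HK : 0 <= K).
  { assert (H := HW_lip 1 0 0 ltac:(lra) ltac:(lra) ltac:(lra)).
    rewrite Rminus_0_r, Rabs_R1 in H. pose proof (Rabs_pos (W 1 0 - W 0 0)). lra. }
  set (m s := W (clamp 0 t0 s) (am (clamp 0 t0 s))).
  destruct (continuity_ab_maj m 0 t0 Ht0) as [t1 [Hmax Ht1]].
  { intros c _. apply (continuity_pt_of_lipschitz m K). intros u v.
    assert (Hu := clamp_in 0 t0 u Ht0). assert (Hv := clamp_in 0 t0 v Ht0).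
    eapply Rle_trans; [apply Hlip; lra|].
    apply Rmult_le_compat_l; [exact HK|apply clamp_lipschitz]. }
  assert (Hm : forall s, 0 <= s <= t0 -> m s = W s (am s))
    by (intros s Hs; unfold m; rewrite clamp_id; auto).
  rewrite Hm in Hmax by exact Ht1.
  destruct (Ham t1 (proj1 Ht1)) as [Hx1 Hx1max].
  assert (Hm1 : 0 < W t1 (am t1)).
  { destruct (Ham t0 Ht0) as [_ H0]. specialize (Hmax t0 ltac:(lra)).
    rewrite Hm in Hmax by lra. specialize (H0 y0 Hy0). lra. }
  apply (Hno_max t1 (am t1)); [| |exact Hx1max|].
  - destruct (Rle_lt_or_eq_dec 0 t1 (proj1 Ht1)) as [|<-]; [assumption|].
    specialize (Hinit (am 0) Hx1). lra.
  - destruct (Hbdry t1 (proj1 Ht1)) as [Hb0 HbL].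
    split.
    + destruct (Rle_lt_or_eq_dec 0 (am t1) (proj1 Hx1)) as [|E]; [assumption|].
      rewrite <- E in Hm1. lra.
    + destruct (Rle_lt_or_eq_dec (am t1) L (proj2 Hx1)) as [|E]; [assumption|].
      rewrite E in Hm1. lra.
  - intros s Hs. specialize (Hmax s ltac:(lra)). rewrite Hm in Hmax by lra.
    destruct (Ham s ltac:(lra)) as [_ Hs_max]. specialize (Hs_max (am t1) Hx1). lra.
Qed.
End MaximumPrinciple.

(* The value of (1/rho) (u'/rho)' at a point where rho = r, rho' = r', u' = u1, u'' = u2. *)
Definition weighted_laplacian (r r' u1 u2 : R) : R := (u2 * r - u1 * r') / r ^ 3.

Lemma weighted_laplacian_scal r r' u1 u2 k : 0 < r ->
  k * weighted_laplacian r r' u1 u2 = weighted_laplacian r r' (k * u1) (k * u2).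
Proof. intros Hr. unfold weighted_laplacian. field. lra. Qed.

Lemma weighted_laplacian_le r r' u1 u2 v2 : 0 < r -> u2 <= v2 ->
  weighted_laplacian r r' u1 u2 <= weighted_laplacian r r' u1 v2.
Proof.
  intros Hr Huv. unfold weighted_laplacian, Rdiv.
  apply Rmult_le_compat_r; [left; apply Rinv_0_lt_compat, pow_lt; exact Hr|].
  apply Rplus_le_compat_r, Rmult_le_compat_r; lra.
Qed.

(* u1, u2 are the derivatives of sg Theta + c (2 - Theta^2) where Theta = th, Theta' = r. *)
Lemma weighted_laplacian_barrier r r' sg c th : 0 < r ->
  weighted_laplacian r r' (sg * r - c * (2 * th * r))
    (sg * r' - c * (2 * (r * r) + 2 * th * r')) = - 2 * c.
Proof. intros Hr. unfold weighted_laplacian. field. lra. Qed.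

Lemma weighted_laplacian_bound r r' u1 u2 M dl du Du : 0 < dl -> dl <= r <= du ->
  Rabs r' <= Du -> Rabs u1 <= M -> Rabs u2 <= M ->
  Rabs (weighted_laplacian r r' u1 u2) <= (M * du + M * Du) / dl ^ 3.
Proof.
  intros Hdl Hr Hr' Hu1 Hu2. unfold weighted_laplacian, Rdiv.
  assert (Hr3 : 0 < r ^ 3) by (apply pow_lt; lra).
  rewrite Rabs_mult, (Rabs_right (/ r ^ 3)) by (left; apply Rinv_0_lt_compat, Hr3).
  apply Rmult_le_compat; [apply Rabs_pos|left; apply Rinv_0_lt_compat, Hr3| |].
  - eapply Rle_trans; [apply Rabs_triang|]. rewrite Rabs_Ropp, !Rabs_mult, (Rabs_right r) by lra.
    apply Rplus_le_compat; apply Rmult_le_compat; try apply Rabs_pos; lra.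
  - apply Rinv_le_contravar; [apply pow_lt; lra|apply pow_incr; lra].
Qed.

Section Solution.
Variables (L : R) (rho Th : R -> R) (X X1 X2 : R -> R -> R) (a b d_l d_u D_u M : R).
Hypothesis HL : 0 < L.
Hypothesis Hd_l : 0 < d_l.
Hypothesis Hrho_bd : forall y, 0 <= y <= L -> d_l <= rho y <= d_u.
Hypothesis Hrho_der : forall y, 0 < y < L -> ex_derive rho y /\ Rabs (Derive rho y) <= D_u.
Hypothesis HTh_der : forall y, 0 < y < L -> is_derive Th y (rho y).
Hypothesis HTh_cont : cont_on_closed 0 L Th.
Hypothesis HTh_range : forall y, 0 <= y <= L -> 0 <= Th y <= 1.
Hypothesis HTh0 : Th 0 = 0.
Hypothesis HThL : Th L = 1.
Hypothesis HX1 : forall t y, 0 <= t -> 0 < y < L -> is_derive (X t) y (X1 t y).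
Hypothesis HX2 : forall t y, 0 <= t -> 0 < y < L -> is_derive (X1 t) y (X2 t y).
Hypothesis HX_cont : cont_on_strip L X.
Hypothesis HX_bd : forall t y, 0 <= t -> 0 <= y <= L -> Rabs (X1 t y) <= M /\ Rabs (X2 t y) <= M.
Hypothesis Hpde : forall t y, 0 < t -> 0 < y < L ->
  ex_derive (fun s => X s y) t /\
  ex_derive (fun z => X1 t z / rho z) y /\
  Derive (fun s => X s y) t = / rho y * Derive (fun z => X1 t z / rho z) y.
Hypothesis Hbc0 : forall t, 0 <= t -> X t 0 = a * exp (- t).
Hypothesis HbcL : forall t, 0 <= t -> X t L = 1 + b * exp (- t).

Let rho_pos y : 0 <= y <= L -> 0 < rho y.
Proof. intros Hy. destruct (Hrho_bd y Hy). lra. Qed.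

Let Th_sq_range y : 0 <= y <= L -> 0 <= Th y ^ 2 <= 1.
Proof.
  intros Hy. destruct (HTh_range y Hy).
  split; [apply pow2_ge_0|rewrite <- (pow1 2); apply pow_incr; lra].
Qed.

Lemma X_time_is_derive t y : 0 < t -> 0 < y < L ->
  is_derive (fun s => X s y) t
    (weighted_laplacian (rho y) (Derive rho y) (X1 t y) (X2 t y)).
Proof.
  intros Ht Hy. destruct (Hpde t y Ht Hy) as [Hex [_ Heq]].
  assert (Hr := rho_pos y ltac:(lra)).
  assert (Hflux : is_derive (fun z => X1 t z / rho z) y
                    ((X2 t y * rho y - X1 t y * Derive rho y) / rho y ^ 2)).
  { apply is_derive_div; [apply HX2; lra|apply Derive_correct, Hrho_der, Hy|lra]. }
  replace (weighted_laplacian _ _ _ _) with (Derive (fun s => X s y) t).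
  - apply Derive_correct, Hex.
  - rewrite Heq.
    replace (Derive (fun z => X1 t z / rho z) y)
      with ((X2 t y * rho y - X1 t y * Derive rho y) / rho y ^ 2)
      by (symmetry; apply is_derive_unique, Hflux).
    unfold weighted_laplacian. field. lra.
Qed.

Lemma X_time_lipschitz : exists K, forall t s y, 0 <= t -> 0 <= s -> 0 <= y <= L ->
  Rabs (X t y - X s y) <= K * Rabs (t - s).
Proof.
  set (B := (M * d_u + M * D_u) / d_l ^ 3).
  assert (Hinterior : forall y, 0 < y < L -> forall u v, 0 <= u <= v ->
            Rabs (X v y - X u y) <= B * Rabs (v - u)).
  { intros y Hy u v Huv.
    set (f r := X (Rmax 0 r) y).
    replace (X v y - X u y) with (f v - f u) by (unfold f; rewrite !Rmax_right; lra).
    apply (lipschitz_of_derive_bound f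
      (fun r => weighted_laplacian (rho y) (Derive rho y) (X1 r y) (X2 r y))); [lra| | |].
    - intros c Hc. apply (is_derive_ext_loc (fun s => X s y)); [|apply X_time_is_derive; lra].
      apply (locally_interval _ c 0 p_infty); [simpl; lra|exact I|].
      intros z Hz _. unfold f. rewrite Rmax_right; [reflexivity|simpl in Hz; lra].
    - intros c _. apply (continuity_pt_strip_time L); [lra|exact HX_cont].
    - intros c Hc. destruct (HX_bd c y ltac:(lra) ltac:(lra)).
      apply weighted_laplacian_bound; try apply Hrho_bd; try apply Hrho_der; lra. }
  exists (Rmax B (Rmax (Rabs a) (Rabs b))). intros t s y Ht Hs Hy.
  assert (Hmono : forall k, k <= Rmax B (Rmax (Rabs a) (Rabs b)) ->
            k * Rabs (t - s) <= Rmax B (Rmax (Rabs a) (Rabs b)) * Rabs (t - s))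
    by (intros; apply Rmult_le_compat_r; [apply Rabs_pos|assumption]).
  assert (Hexp : forall k, Rabs (k * exp (- t) - k * exp (- s)) <= Rabs k * Rabs (t - s)).
  { intros k. rewrite <- Rmult_minus_distr_l, Rabs_mult.
    apply Rmult_le_compat_l; [apply Rabs_pos|apply exp_neg_lipschitz; assumption]. }
  destruct (Req_dec y 0) as [->|Hy0]; [|destruct (Req_dec y L) as [->|HyL]].
  - rewrite (Hbc0 t Ht), (Hbc0 s Hs).
    eapply Rle_trans; [apply Hexp|apply Hmono].
    eapply Rle_trans; [apply Rmax_l|apply Rmax_r].
  - rewrite (HbcL t Ht), (HbcL s Hs).
    replace (1 + b * exp (- t) - (1 + b * exp (- s))) with (b * exp (- t) - b * exp (- s))
      by ring.
    eapply Rle_trans; [apply Hexp|apply Hmono].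
    eapply Rle_trans; [apply Rmax_r|apply Rmax_r].
  - eapply Rle_trans; [|apply Hmono, Rmax_l].
    apply (lipschitz_of_ordered (fun r => X r y)); [apply Hinterior; lra|assumption..].
Qed.

(* With c = C e^{-t}, the time derivative of the barrier exceeds L barrier = -2c by
   c Th^2 + eps > 0. *)
Definition barrier (sg C eps t y : R) : R :=
  sg * Th y + C * exp (- t) * (2 - Th y ^ 2) + eps * (1 + t).

Lemma is_derive_barrier_space sg C eps t z : 0 < z < L ->
  is_derive (barrier sg C eps t) z (sg * rho z - C * exp (- t) * (2 * Th z * rho z)).
Proof.
  intros Hz. assert (HThz := HTh_der z Hz). unfold barrier.
  auto_derive; [repeat split; exists (rho z); exact HThz|].
  replace (Derive (fun x => Th x) z) with (rho z) by (symmetry; apply is_derive_unique, HThz).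
  ring.
Qed.

Lemma is_derive_barrier_space2 sg c y : 0 < y < L ->
  is_derive (fun z => sg * rho z - c * (2 * Th z * rho z)) y
    (sg * Derive rho y - c * (2 * (rho y * rho y) + 2 * Th y * Derive rho y)).
Proof.
  intros Hy. assert (HThy := HTh_der y Hy). assert (Hrhoy := proj1 (Hrho_der y Hy)).
  auto_derive; [repeat split; try exact Hrhoy; exists (rho y); exact HThy|].
  replace (Derive (fun x => Th x) y) with (rho y) by (symmetry; apply is_derive_unique, HThy).
  change (Derive (fun x => rho x) y) with (Derive rho y). ring.
Qed.

Lemma is_derive_barrier_time sg C eps t y :
  is_derive (fun s => barrier sg C eps s y) t (- (C * exp (- t) * (2 - Th y ^ 2)) + eps).
Proof. unfold barrier. auto_derive; [exact I|ring]. Qed.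

Lemma barrier_no_interior_max sg C eps t y : 0 <= C -> 0 < eps -> 0 < t -> 0 < y < L ->
  (forall z, 0 <= z <= L ->
     sg * X t z - barrier sg C eps t z <= sg * X t y - barrier sg C eps t y) ->
  (forall s, 0 <= s <= t ->
     sg * X s y - barrier sg C eps s y <= sg * X t y - barrier sg C eps t y) ->
  False.
Proof.
  intros HC Heps Ht Hy Hspace Htime.
  set (c := C * exp (- t)).
  assert (Hc : 0 <= c) by (apply Rmult_le_pos; [exact HC|left; apply exp_pos]).
  assert (Hr := rho_pos y ltac:(lra)).
  set (V1 z := sg * rho z - c * (2 * Th z * rho z)).
  set (V2 := sg * Derive rho y - c * (2 * (rho y * rho y) + 2 * Th y * Derive rho y)).
  destruct (interior_max_derive (fun z => sg * X t z - barrier sg C eps t z)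
              (fun z => sg * X1 t z - V1 z) 0 L y (sg * X2 t y - V2) Hy)
    as [Hcrit Hconcave]; cbv beta in *.
  - intros z Hz. apply is_derive_scal_minus; [apply HX1; lra|apply is_derive_barrier_space, Hz].
  - apply is_derive_scal_minus; [apply HX2; lra|apply is_derive_barrier_space2, Hy].
  - intros z Hz. apply Hspace. lra.
  - assert (Hdt := is_derive_nonneg_of_left_max _ _ _ t
             (is_derive_scal_minus _ _ sg t _ _
                (X_time_is_derive t y Ht Hy) (is_derive_barrier_time sg C eps t y))
             Ht ltac:(intros s Hs; apply Htime; lra)).
    (* at the maximum, d/dt barrier <= d/dt (sg X) = L (sg X) <= L barrier = -2c *)
    assert (Hlap : sg * weighted_laplacian (rho y) (Derive rho y) (X1 t y) (X2 t y) <= - 2 * c).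
    { rewrite weighted_laplacian_scal by exact Hr.
      rewrite (Rminus_diag_uniq _ _ Hcrit).
      rewrite <- (weighted_laplacian_barrier (rho y) (Derive rho y) sg c (Th y) Hr).
      apply weighted_laplacian_le; [exact Hr|unfold V2 in Hconcave; lra]. }
    assert (0 <= c * Th y ^ 2) by (apply Rmult_le_pos; [exact Hc|apply pow2_ge_0]).
    fold c in Hdt. lra.
Qed.

Lemma barrier_time_lipschitz sg C eps t s y : 0 <= C -> 0 <= eps -> 0 <= t -> 0 <= s ->
  0 <= y <= L ->
  Rabs (barrier sg C eps t y - barrier sg C eps s y) <= (2 * C + eps) * Rabs (t - s).
Proof.
  intros HC Heps Ht Hs Hy. assert (Hsq := Th_sq_range y Hy).
  assert (Hq : 0 <= C * (2 - Th y ^ 2) <= 2 * C).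
  { split; [apply Rmult_le_pos; lra|]. rewrite Rmult_comm. apply Rmult_le_compat_r; lra. }
  unfold barrier.
  replace (sg * Th y + C * exp (- t) * (2 - Th y ^ 2) + eps * (1 + t) -
           (sg * Th y + C * exp (- s) * (2 - Th y ^ 2) + eps * (1 + s)))
    with (C * (2 - Th y ^ 2) * (exp (- t) - exp (- s)) + eps * (t - s)) by ring.
  eapply Rle_trans; [apply Rabs_triang|].
  rewrite (Rabs_mult (C * _)), (Rabs_mult eps), (Rabs_right eps), (Rabs_right (C * _)) by lra.
  assert (Hexp := exp_neg_lipschitz t s Ht Hs).
  assert (C * (2 - Th y ^ 2) * Rabs (exp (- t) - exp (- s)) <= 2 * C * Rabs (t - s)).
  { apply Rmult_le_compat; try apply Rabs_pos; lra. }
  lra.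
Qed.

Lemma barrier_gap_time_lipschitz sg C eps K t s y : 0 <= C -> 0 <= eps ->
  (forall t s y, 0 <= t -> 0 <= s -> 0 <= y <= L -> Rabs (X t y - X s y) <= K * Rabs (t - s)) ->
  0 <= t -> 0 <= s -> 0 <= y <= L ->
  Rabs (sg * X t y - barrier sg C eps t y - (sg * X s y - barrier sg C eps s y))
    <= (Rabs sg * K + (2 * C + eps)) * Rabs (t - s).
Proof.
  intros HC Heps HK Ht Hs Hy.
  replace (sg * X t y - barrier sg C eps t y - (sg * X s y - barrier sg C eps s y))
    with (sg * (X t y - X s y) + - (barrier sg C eps t y - barrier sg C eps s y)) by ring.
  eapply Rle_trans; [apply Rabs_triang|].
  rewrite Rabs_Ropp, Rabs_mult, Rmult_plus_distr_r, Rmult_assoc.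
  apply Rplus_le_compat; [apply Rmult_le_compat_l; [apply Rabs_pos|apply HK; assumption]|].
  apply barrier_time_lipschitz; assumption.
Qed.

Lemma X_below_barrier sg C eps : Rabs sg = 1 -> 0 < eps ->
  (forall y, 0 <= y <= L -> Rabs (X 0 y) + 1 <= C) -> Rabs a <= C -> Rabs b <= C ->
  forall t y, 0 <= t -> 0 <= y <= L -> sg * X t y <= barrier sg C eps t y.
Proof.
  intros Hsg Heps HC0 Ha Hb t y Ht Hy.
  assert (HC : 0 <= C) by (pose proof (Rabs_pos a); lra).
  assert (Hsg_le : forall v, sg * v <= Rabs v)
    by (intros v; rewrite <- (Rmult_1_l (Rabs v)), <- Hsg, <- Rabs_mult; apply Rle_abs).
  destruct X_time_lipschitz as [K HK].
  cut (sg * X t y - barrier sg C eps t y <= 0); [lra|].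
  apply (parabolic_maximum_principle L (Rabs sg * K + (2 * C + eps))
           (fun t y => sg * X t y - barrier sg C eps t y)); try assumption.
  all: cbv beta.
  - intros t' Ht'. unfold barrier. cbn [pow].
    assert (HX := cont_on_strip_space L X t' Ht' HX_cont).
    assert (HL' : 0 <= L) by lra.
    repeat first [ apply cont_on_closed_minus | apply cont_on_closed_plus
                 | apply cont_on_closed_mult | apply cont_on_closed_const | assumption ].
  - intros t' s y' Ht' Hs Hy'. apply barrier_gap_time_lipschitz; try assumption; lra.
  - intros y' Hy'. unfold barrier. rewrite Ropp_0, exp_0.
    destruct (HTh_range y' Hy'). assert (Hsq := Th_sq_range y' Hy').
    assert (sg * (X 0 y' - Th y') <= Rabs (X 0 y') + 1).
    { eapply Rle_trans; [apply Hsg_le|]. eapply Rle_trans; [apply Rabs_triang|].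
      rewrite Rabs_Ropp, (Rabs_right (Th y')) by lra. lra. }
    assert (HC0 := HC0 y' Hy'). nra.
  - intros t' Ht'. pose proof (exp_pos (- t')) as He.
    assert (Hbound : forall v, Rabs v <= C -> sg * (v * exp (- t')) <= C * exp (- t')).
    { intros v Hv. rewrite <- Rmult_assoc. apply Rmult_le_compat_r; [lra|].
      eapply Rle_trans; [apply Hsg_le|exact Hv]. }
    unfold barrier. rewrite (Hbc0 t' Ht'), (HbcL t' Ht'), HTh0, HThL.
    assert (Ha' := Hbound a Ha). assert (Hb' := Hbound b Hb).
    assert (0 <= eps * (1 + t')) by (apply Rmult_le_pos; lra).
    split; nra.
  - intros t' y' Ht' Hy'. apply (barrier_no_interior_max sg C eps t' y'); assumption.
Qed.

Lemma X_deviation_bound : exists C, forall t y, 0 <= t -> 0 <= y <= L ->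
  Rabs (X t y - Th y) <= C * exp (- t).
Proof.
  destruct (cont_on_closed_bounded 0 L (X 0) ltac:(lra)
              (cont_on_strip_space L X 0 (Rle_refl 0) HX_cont)) as [M0 HM0].
  assert (HM0_pos : 0 <= M0) by (pose proof (Rabs_pos (X 0 0)); pose proof (HM0 0 ltac:(lra)); lra).
  set (C := M0 + 1 + Rabs a + Rabs b).
  assert (Ha : 0 <= Rabs a) by apply Rabs_pos. assert (Hb : 0 <= Rabs b) by apply Rabs_pos.
  exists (2 * C). intros t y Ht Hy.
  assert (He := exp_pos (- t)). assert (Hsq := Th_sq_range y Hy).
  assert (Hside : forall sg, Rabs sg = 1 -> sg * (X t y - Th y) <= 2 * C * exp (- t)).
  { intros sg Hsg. apply Rle_plus_epsilon. intros e He_pos.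
    assert (Hbar := X_below_barrier sg C (e / (1 + t)) Hsg
              ltac:(apply Rdiv_lt_0_compat; lra)
              ltac:(intros y' Hy'; pose proof (HM0 y' Hy'); unfold C; lra)
              ltac:(unfold C; lra) ltac:(unfold C; lra) t y Ht Hy).
    unfold barrier in Hbar.
    replace (e / (1 + t) * (1 + t)) with e in Hbar by (field; lra).
    assert (C * exp (- t) * (2 - Th y ^ 2) <= 2 * C * exp (- t)).
    { replace (2 * C * exp (- t)) with (C * exp (- t) * 2) by ring.
      apply Rmult_le_compat_l; [|lra].
      apply Rmult_le_pos; [unfold C; lra|lra]. }
    lra. }
  apply Rabs_le. split.
  - assert (H := Hside (-1) ltac:(rewrite Rabs_left; lra)). lra.
  - assert (H := Hside 1 Rabs_R1). lra.
Qed.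

End Solution.

Theorem mainTheorem2
  (L : R) (HL : 0 < L)
  (rho : R -> R) (d_l d_u D_l D_u : R)
  (Hrho_cont : cont_on_closed 0 L rho)
  (Hrho_norm : RInt rho 0 L = 1)
  (Hd : 0 < d_l /\ d_l <= d_u)
  (Hrho_bd : forall x, 0 <= x <= L -> d_l <= rho x <= d_u)
  (HD : 0 < D_l /\ D_l <= D_u)
  (Hrho_der : forall x, 0 < x < L -> ex_derive rho x /\ D_l <= Derive rho x <= D_u)
  (X0 : R -> R) (HX0 : C2_on 0 L X0)
  (X X1 X2 : R -> R -> R) (alpha beta : R -> R)
  (* regularity of the solution: C^2 in space up to the boundary, with
     jointly continuous derivatives, C^1 in time *)
  (HX1 : forall t x, 0 <= t -> 0 < x < L -> is_derive (X t) x (X1 t x))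
  (HX2 : forall t x, 0 <= t -> 0 < x < L -> is_derive (X1 t) x (X2 t x))
  (HXc : cont_on_strip L X) (HX1c : cont_on_strip L X1) (HX2c : cont_on_strip L X2)
  (* smoothness persisting as t -> oo *)
  (Hunif : exists M, forall t x, 0 <= t -> 0 <= x <= L ->
             Rabs (X1 t x) <= M /\ Rabs (X2 t x) <= M)
  (HH1 : forall t, 0 <= t -> in_H1 L (X t))
  (* the PDE *)
  (Hpde : forall t x, 0 < t -> 0 < x < L ->
     ex_derive (fun s => X s x) t /\
     ex_derive (fun y => X1 t y / rho y) x /\
     Derive (fun s => X s x) t = / rho x * Derive (fun y => X1 t y / rho y) x)
  (* boundary and initial conditions *)
  (Hbc0 : forall t, 0 <= t -> X t 0 = alpha t)
  (HbcL : forall t, 0 <= t -> X t L = beta t)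
  (Hinit : forall x, 0 <= x <= L -> X 0 x = X0 x)
  (* boundary dynamics *)
  (Halpha : forall t, 0 <= t -> is_derive alpha t (- alpha t))
  (Hbeta : forall t, 0 <= t -> is_derive beta t (1 - beta t))
  (Hab0 : alpha 0 = X0 0 /\ beta 0 = X0 L) :
  forall x, 0 < x < L -> is_lim (fun t => X t x) p_infty (Theta rho x).
Proof.
  intros x Hx. destruct Hunif as [M HM].
  assert (HL' : 0 <= L) by lra.
  assert (HTh_range : forall y, 0 <= y <= L -> 0 <= Theta rho y <= 1).
  { intros y Hy. rewrite <- Hrho_norm. apply (Theta_range L rho HL' Hrho_cont); [|exact Hy].
    intros z Hz. destruct (Hrho_bd z Hz), Hd. lra. }
  assert (Halpha_sol : forall t, 0 <= t -> X t 0 = alpha 0 * exp (- t)).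
  { intros t Ht. rewrite (Hbc0 t Ht), (relaxation_ode_solution alpha 0); [ring| |exact Ht].
    intros s Hs. rewrite Rminus_0_l. exact (Halpha s Hs). }
  assert (Hbeta_sol : forall t, 0 <= t -> X t L = 1 + (beta 0 - 1) * exp (- t)).
  { intros t Ht. rewrite (HbcL t Ht). exact (relaxation_ode_solution beta 1 Hbeta t Ht). }
  destruct (X_deviation_bound L rho (Theta rho) X X1 X2 (alpha 0) (beta 0 - 1) d_l d_u D_u M)
    as [C HC]; try assumption.
  - apply Hd.
  - intros y Hy. destruct (Hrho_der y Hy) as [Hex Hbd]. split; [exact Hex|].
    rewrite Rabs_right; lra.
  - apply (is_derive_Theta L rho HL' Hrho_cont).
  - exact (Theta_cont L rho HL' Hrho_cont).
  - apply Theta_0.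
  - apply (is_lim_of_exp_decay _ _ C). intros t Ht. apply HC; lra.
Qed.
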